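(* Let $\mathbb{F}$ be a field, and let $\mathcal{C}\subseteq\mathbb{F}^N$ be a systematic linear code of dimension $n$ which is an $(s,t)$-batch code, where $1\le s\le t$. Then for every integer $u$ with $1\le u\le s$ (and $u\le n$) and every integer $v$ with $1\le v\le \lfloor t/u\rfloor-1$, the code $\mathcal{C}$ is a $(u,v)$-ordered-batch code.
   Context: For a positive integer $m$, $[m]=\{1,\dots,m\}$. A linear code $\mathcal{C}\subseteq\mathbb{F}^N$ of dimension $n$ is systematic if for every $\mathbf{x}\in\mathbb{F}^n$ there is a unique codeword whose first $n$ coordinates equal $\mathbf{x}$ (coordinates $1,\dots,n$ are the information symbols). For $\mathbf{c}\in\mathcal{C}$ write $\mathbf{c}(i)$ for its $i$-th coordinate. A set $R\subseteq[N]$ is a recovering set for $i\in[n]$ if there are scalars $\lambda_k\in\mathbb{F}$ ($k\in R$) with $\mathbf{c}(i)=\sum_{k\in R}\lambda_k\mathbf{c}(k)$ for all $\mathbf{c}\in\mathcal{C}$. $(s,t)$-batch code ($1\le s\le t$): a systematic linear code $\mathcal{C}\subseteq\mathbb{F}^N$ of dimension $n$ such that for every choice of indices $i_1,\dots,i_s\in[n]$ (not necessarily distinct) and nonnegative integers $a_1,\dots,a_s$ with $\sum_{j=1}^s a_j=t$, there exist $t$ pairwise disjoint sets $R_{j,l}\subseteq[N]$ ($j\in[s]$, $l\in[a_j]$) such that each $R_{j,l}$ is a recovering set for $i_j$. $(u,v)$-ordered-batch code ($u,v$ positive integers): a systematic linear code $\mathcal{C}\subseteq\mathbb{F}^N$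 of dimension $n$ such that for every set $I=\{i_1,\dots,i_u\}\subseteq[n]$ of $u$ distinct indices there exist $uv$ pairwise disjoint sets $R_{j,l}\subseteq[N]$ ($j\in[u]$, $l\in[v]$), each $R_{j,l}$ a recovering set for $i_j$, such that the directed graph $D_I$ with vertex set $I$ and an arc $i_j\to i_k$ (for $j,k\in[u]$, $j=k$ allowed, giving a loop) whenever $i_k\in\bigcup_{l=1}^{v}R_{j,l}$, is acyclic (has no directed cycles, in particular no loops). *)

From HB Require Import structures.
From mathcomp Require Import all_boot all_order all_algebra.
Set Implicit Arguments. Unset Strict Implicit. Unset Printing Implicit Defensive.
Import GRing.Theory.
Local Open Scope ring_scope.

(* Information coordinates are the
   first n coordinates, i.e. widen_ord nN i for i : 'I_n (nN : n <= N). *)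

Definition systematic (F : fieldType) (N n : nat) (nN : (n <= N)%N)
    (C : {vspace 'rV[F]_N}) : Prop :=
  forall x : 'rV[F]_n, exists! c : 'rV[F]_N,
    c \in C /\ forall i : 'I_n, c 0 (widen_ord nN i) = x 0 i.

Definition recovering (F : fieldType) (N n : nat) (nN : (n <= N)%N)
    (C : {vspace 'rV[F]_N}) (R : {set 'I_N}) (i : 'I_n) : Prop :=
  exists lam : 'I_N -> F, forall c : 'rV[F]_N, c \in C ->
    c 0 (widen_ord nN i) = \sum_(k in R) lam k * c 0 k.

(* (s,t)-batch code.  The family R_{j,l} (j in [s], l in [a_j]) is encoded as
   R : 'I_s -> nat -> {set 'I_N}, only the values with l < a j being used. *)
Definition batch_code (F : fieldType) (N n : nat) (nN : (n <= N)%N)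
    (C : {vspace 'rV[F]_N}) (s t : nat) : Prop :=
  systematic nN C /\
  forall (idx : 'I_s -> 'I_n) (a : 'I_s -> nat),
    (\sum_(j < s) a j)%N = t ->
    exists R : 'I_s -> nat -> {set 'I_N},
      (forall (j : 'I_s) (l : nat), (l < a j)%N -> recovering nN C (R j l) (idx j)) /\
      (forall (j j' : 'I_s) (l l' : nat), (l < a j)%N -> (l' < a j')%N ->
          (j, l) != (j', l') -> [disjoint R j l & R j' l']).

(* Directed graph on vertices 'I_u given by an edge relation e is acyclic:
   no (nonempty) directed closed walk, loops included. *)
Definition acyclic (u : nat) (e : rel 'I_u) : Prop :=
  forall c : seq 'I_u, c != [::] -> ~~ cycle e c.

(* A u-set I of distinct information indices is
   given as an injective map idx : 'I_u -> 'I_n (vertex j stands for i_j).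
   Arc j -> k in D_I iff i_k lies in the union of R_{j,1..v}. *)
Definition ordered_batch_code (F : fieldType) (N n : nat) (nN : (n <= N)%N)
    (C : {vspace 'rV[F]_N}) (u v : nat) : Prop :=
  systematic nN C /\
  forall idx : 'I_u -> 'I_n, injective idx ->
    exists R : 'I_u -> 'I_v -> {set 'I_N},
      (forall j l, recovering nN C (R j l) (idx j)) /\
      (forall j j' l l', (j, l) != (j', l') -> [disjoint R j l & R j' l']) /\
      acyclic [rel j k | widen_ord nN (idx k) \in \bigcup_(l < v) R j l].

From HB Require Import structures.
From mathcomp Require Import all_boot all_order all_algebra.
From mathcomp Require Import zify.

(* Given u distinct information indices i_1..i_u, ask the batch code to
   serve each of them v+1 times (padding the remaining t - u(v+1) requests
   onto one index).  This gives v+1 pairwise disjoint recovering sets per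
   index.  Let j -> k mean that i_k lies in one of the v+1 sets of j.  By
   disjointness every coordinate lies in at most one set, so every vertex
   has in-degree at most one.  In such a graph, a vertex j lying on a closed
   walk has a unique "return arc" j -> k with k reaching back to j: walking
   backwards from j is deterministic, and the second vertex of any closed
   walk through j is some backward iterate of j determined by its period.
   Dropping, for each j, the set containing the return-arc target leaves v
   sets per index, and the resulting digraph is acyclic, since any cycle
   through j would leave j along its return arc. *)

Set Implicit Arguments.
Unset Strict Implicit.
Unset Printing Implicit Defensive.

Lemma iter_period (T : Type) (f : T -> T) (A : nat) (x : T) :
  iter A f x = x -> forall m, iter (A * m) f x = x.
Proof. by move=> fx; elim=> [|m IH]; rewrite ?muln0 // mulnS iterD IH. Qed.

Section InDegreeAtMostOne.
Variables (T : finType) (e : rel T).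
Hypothesis e_indeg : forall a b k, e a k -> e b k -> a = b.

Definition parent (k : T) : T := odflt k [pick a | e a k].

Lemma parentP a k : e a k -> parent k = a.
Proof.
rewrite /parent; case: pickP => [b ebk|/(_ a) -> //] eak.
exact: e_indeg ebk eak.
Qed.

Lemma path_parent x s : path e x s -> iter (size s) parent (last x s) = x.
Proof.
elim: s x => [//|y s IH] x /= /andP[exy pys].
by rewrite (IH _ pys) (parentP exy).
Qed.

Lemma return_arc_iter j k : e j k -> connect e k j ->
  exists2 A, iter A.+1 parent j = j & k = iter A parent j.
Proof.
move=> ejk /connectP[p pkp jE].
have back : iter (size p) parent j = k by rewrite jE path_parent.
by exists (size p); rewrite ?iterS back ?(parentP ejk).
Qed.

(* A vertex has at most one out-arc leading back to it: both targets equal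
   the parent-iterate of j of order (A.+1)(B.+1) - 1. *)
Lemma return_arc_unique j k k' : e j k -> connect e k j ->
  e j k' -> connect e k' j -> k = k'.
Proof.
move=> ejk ckj ejk' ck'j.
have [A perA ->] := return_arc_iter ejk ckj.
have [B perB ->] := return_arc_iter ejk' ck'j.
rewrite -{1}(iter_period perA B) -{2}(iter_period perB A) -!iterD.
by congr iter; lia.
Qed.

End InDegreeAtMostOne.

(* Vertices 'I_u carrying v+1 pairwise disjoint sets each; vertex k is
   represented by the point p k, and j covers k when p k lies in a set of j. *)
Section DropReturnSets.
Variables (X : finType) (u v : nat) (p : 'I_u -> X).
Variable Q : 'I_u -> 'I_v.+1 -> {set X}.
Hypothesis Q_disjoint : forall j j' l l', (j, l) != (j', l') ->
  [disjoint Q j l & Q j' l'].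

Lemma point_owner j j' l l' k : p k \in Q j l -> p k \in Q j' l' ->
  (j, l) = (j', l').
Proof.
move=> kQ kQ'; apply/eqP; apply: contraT => neq.
by rewrite (disjointFr (Q_disjoint neq) kQ) in kQ'.
Qed.

Definition covers : rel 'I_u := fun j k => [exists l, p k \in Q j l].

Lemma covers_indeg a b k : covers a k -> covers b k -> a = b.
Proof. by move=> /existsP[l kQ] /existsP[l' kQ']; case: (point_owner kQ kQ'). Qed.

Lemma return_set_exists j : exists dl : 'I_v.+1,
  forall k, covers j k -> connect covers k j -> p k \in Q j dl.
Proof.
case: (pickP [pred k | covers j k && connect covers k j]) => [k /andP[cjk ckj] | none].
  have [dl kQ] := existsP cjk; exists dl => k' cjk' ck'j.
  by rewrite (return_arc_unique covers_indeg cjk' ck'j cjk ckj).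
by exists ord0 => k cjk ckj; have := none k; rewrite /= cjk ckj.
Qed.

(* Removing the return set of every vertex leaves an acyclic digraph: on a
   cycle through j, the arc leaving j is a return arc, so its target lies in
   the removed set, while it also lies in a kept one. *)
Lemma drop_return_sets : exists d : 'I_u -> 'I_v.+1,
  acyclic [rel j k | p k \in \bigcup_(l < v) Q j (lift (d j) l)].
Proof.
have [d dP] := fin_all_exists return_set_exists.
exists d => [[//|j c]] _; apply/negP; rewrite /cycle.
have: last j (rcons c j) = j by rewrite last_rcons.
case def_s: (rcons c j) => [|k s]; first by case: c def_s.
move=> /= sj /andP[/bigcupP[l _ kQ] walk].
have ckj : connect covers k j.
  apply/connectP; exists s => //; apply: sub_path walk => x y /bigcupP[l' _ yQ].
  by apply/existsP; exists (lift (d x) l').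
have cjk : covers j k by apply/existsP; exists (lift (d j) l).
have /(congr1 snd) /= same := point_owner kQ (dP j k cjk ckj).
by move: (neq_lift (d j) l); rewrite same eqxx.
Qed.

End DropReturnSets.

Lemma batch_demand_sum (s u m r : nat) : (0 < u)%N -> (u <= s)%N ->
  (\sum_(j < s) (m * (j < u) + r * (j == 0%N :> nat)))%N = (u * m + r)%N.
Proof.
move=> u_gt0 us; rewrite big_split /=; congr addn.
  rewrite (eq_bigr (fun j : 'I_s => if (j < u)%N then m else 0%N)); last first.
    by move=> j _; case: ifP; rewrite ?muln1 ?muln0.
  by rewrite -big_mkcond /= -big_ord_widen // sum_nat_const card_ord.
case: s us => [|s] us; first by case: u u_gt0 us.
rewrite big_ord_recl /= muln1 big1 ?addn0 // => j _.
by rewrite muln0.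
Qed.

Lemma batch_code_serves_uniformly (F : fieldType) (N n : nat) (nN : (n <= N)%N)
    (C : {vspace 'rV[F]_N}) (s t u m : nat) :
  batch_code nN C s t -> (0 < u)%N -> (u <= s)%N -> (u * m <= t)%N ->
  forall idx : 'I_u -> 'I_n, exists Q : 'I_u -> 'I_m -> {set 'I_N},
    (forall j l, recovering nN C (Q j l) (idx j)) /\
    (forall j j' l l', (j, l) != (j', l') -> [disjoint Q j l & Q j' l']).
Proof.
move=> [_ batch] u_gt0 us umt idx.
(* Request index idx j at position j < u (and an arbitrary one beyond),
   m times each, plus the t - u * m leftover requests at position 0. *)
pose idx' (j : 'I_s) : 'I_n := odflt (idx (Ordinal u_gt0)) (omap idx (insub (val j))).
pose a (j : 'I_s) : nat := (m * (j < u) + (t - u * m) * (j == 0%N :> nat))%N.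
have [R [R_rec R_disj]] : exists R : 'I_s -> nat -> {set 'I_N},
    (forall j l, (l < a j)%N -> recovering nN C (R j l) (idx' j)) /\
    (forall j j' l l', (l < a j)%N -> (l' < a j')%N ->
       (j, l) != (j', l') -> [disjoint R j l & R j' l']).
  by apply: batch; rewrite batch_demand_sum // subnKC.
have demand j : (m <= a (widen_ord us j))%N by rewrite /a /= ltn_ord muln1 leq_addr.
have served j (l : 'I_m) : (l < a (widen_ord us j))%N := leq_trans (ltn_ord l) (demand j).
exists (fun j l => R (widen_ord us j) l); split=> [j l|j j' l l' neq].
  by have := R_rec _ _ (served j l); rewrite /idx' /= valK.
apply: R_disj (served _ _) (served _ _) _; apply: contra neq.
rewrite xpair_eqE => /andP[/eqP [/val_inj ->] /eqP/val_inj ->].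
by rewrite !eqxx.
Qed.

(* Proposition 1: serve the u indices v+1 times each, then drop the return
   set of every index. *)
Theorem proposition1 (F : fieldType) (N n : nat) (nN : (n <= N)%N)
    (C : {vspace 'rV[F]_N}) (s t : nat) :
  (1 <= s)%N -> (s <= t)%N -> batch_code nN C s t ->
  forall u v : nat, (1 <= u)%N -> (u <= s)%N -> (u <= n)%N ->
    (1 <= v)%N -> (v <= t %/ u - 1)%N ->
    ordered_batch_code nN C u v.
Proof.
move=> _ _ code u v u_gt0 us _ v_gt0 v_le; split=> [|idx _]; first by case: code.
have uvt : (u * v.+1 <= t)%N by rewrite mulnC -leq_divRL //; lia.
have [Q [Q_rec Q_disj]] := batch_code_serves_uniformly code u_gt0 us uvt idx.
have [d acyclic_d] := drop_return_sets (fun k => widen_ord nN (idx k)) Q_disj.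
exists (fun j l => Q j (lift (d j) l)); split=> [j l|]; first exact: Q_rec.
split=> // j j' l l' neq; apply: Q_disj; apply: contra neq.
rewrite !xpair_eqE => /andP[/eqP ej]; rewrite -ej in l' * => /eqP/lift_inj ->.
by rewrite !eqxx.
Qed.
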